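(* For every $n\ge1$ there is a bijection $\omega$ from the set of Schröder permutations in $\mathcal{S}_n$ to itself such that for all $k\ge3$ and every Schröder permutation $\pi\in\mathcal{S}_n$, $\pi$ avoids $12\cdots k$ if and only if $\omega(\pi)$ avoids $2\,1\,3\,4\cdots k$.
   Context: A permutation avoids $\tau\in\mathcal{S}_k$ if no subsequence of length $k$ is in the same relative order as $\tau$. A Schröder permutation is a permutation avoiding both $1243$ and $2143$. *)

From mathcomp Require Import all_boot all_fingroup.
Set Implicit Arguments. Unset Strict Implicit. Unset Printing Implicit Defensive.

(* A pattern tau in S_k is a sequence of naturals listing its values, written
   with values 0..k-1 (so "12...k" is iota 0 k, "2134...k" is 1::0::iota 2 (k-2)). *)

Definition contains (n : nat) (pi : {perm 'I_n}) (tau : seq nat) : Prop :=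
  exists idx : seq 'I_n,
    [/\ size idx = size tau,
        sorted ltn (map val idx) &
        forall a b, (a < size tau)%N -> (b < size tau)%N ->
          (nth 0 (map (fun i => val (pi i)) idx) a <
             nth 0 (map (fun i => val (pi i)) idx) b)%N
          = (nth 0 tau a < nth 0 tau b)%N].

Definition avoids (n : nat) (pi : {perm 'I_n}) (tau : seq nat) : Prop :=
  ~ contains pi tau.

Definition pat1243 : seq nat := [:: 0; 1; 3; 2].
Definition pat2143 : seq nat := [:: 1; 0; 3; 2].

Definition schroder (n : nat) (pi : {perm 'I_n}) : Prop :=
  avoids pi pat1243 /\ avoids pi pat2143.

Definition inc_pat (k : nat) : seq nat := iota 0 k.
Definition pat2134 (k : nat) : seq nat := 1 :: 0 :: iota 2 (k - 2).

(* Let s be a duplicate-free Schroder sequence with maximum n, not decreasing,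
   and write s = A n B with a1 = min A.  Avoiding 1243 and 2143 forces every
   entry of B below every entry of A other than a1.  Hence an increasing
   subsequence of s of length k+1 lies in A n or in a1 B, and for k >= 2 the
   same holds for occurrences of 2 1 3 ... (k+1).  The bijection w follows this
   decomposition: a decreasing s is reversed, A n with A decreasing becomes
   n rev(A), n B becomes n w(B), and otherwise
       w(A n B) = w(A)[a1 := h] n B'   where   w(a1 B) = h B',
   h being below every entry of A other than a1.  The four cases can be told apart on the output,
   which gives injectivity; surjectivity follows by counting. *)

From mathcomp Require Import all_boot all_fingroup zify.
From Stdlib Require Import ClassicalEpsilon.
Set Implicit Arguments. Unset Strict Implicit. Unset Printing Implicit Defensive.

Lemma pairwise_rev (T : Type) (r : rel T) s :
  pairwise r (rev s) = pairwise (fun x y => r y x) s.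
Proof.
by elim: s => //= x s IH; rewrite rev_cons pairwise_rcons all_rev IH andbC.
Qed.

Lemma subseq_catP (T : eqType) (t s1 s2 : seq T) : subseq t (s1 ++ s2) ->
  exists t1 t2, [/\ t = t1 ++ t2, subseq t1 s1 & subseq t2 s2].
Proof.
case/subseqP=> m sz_m ->; rewrite -(cat_take_drop (size s1) m) mask_cat; last first.
  by rewrite size_takel // sz_m size_cat leq_addr.
by do 2!eexists; split; [reflexivity | apply: mask_subseq..].
Qed.

Lemma subseq_consP (T : eqType) (x y : T) s t : subseq (x :: s) (y :: t) ->
  (x = y /\ subseq s t) \/ subseq (x :: s) t.
Proof. by rewrite /=; case: eqVneq => [->|_]; [left | right]. Qed.

Lemma subseq_pair_cases (T : eqType) (s : seq T) x y : x \in s -> y \in s -> x != y ->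
  subseq [:: x; y] s \/ subseq [:: y; x] s.
Proof.
elim: s => // c s IH; rewrite !inE => xs ys neq_xy.
have [eq_xc|neq_xc] := eqVneq x c.
  by subst c; left; rewrite /= eqxx sub1seq; move: ys; rewrite eq_sym (negbTE neq_xy).
have [eq_yc|neq_yc] := eqVneq y c.
  by subst c; right; rewrite /= eqxx sub1seq; move: xs; rewrite (negbTE neq_xc).
move: xs ys; rewrite (negbTE neq_xc) (negbTE neq_yc) /= => xs ys.
by case: (IH xs ys neq_xy) => sub; [left|right]; apply: subseq_trans sub (subseq_cons _ _).
Qed.

Lemma pairwise_small (T : Type) (r : rel T) t : size t <= 1 -> pairwise r t.
Proof. by case: t => [|x [|]]. Qed.

Lemma pairwise_take (T : eqType) (r : rel T) j t : pairwise r t -> pairwise r (take j t).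
Proof. exact/subseq_pairwise/take_subseq. Qed.

Lemma cat_take_index_drop (T : eqType) (x : T) s : x \in s ->
  take (index x s) s ++ x :: drop (index x s).+1 s = s.
Proof.
move=> xs; have lt_i : index x s < size s by rewrite index_mem.
by rewrite -[in RHS](cat_take_drop (index x s) s) (drop_nth x lt_i) nth_index.
Qed.

Lemma ltn_nth_inc t a b : pairwise ltn t -> a < size t -> b < size t ->
  (nth 0 t a < nth 0 t b) = (a < b).
Proof.
move=> /(pairwiseP 0) inc_t lt_a lt_b.
have [lt_ab|lt_ba|->] := ltngtP a b; last by rewrite ltnn.
  exact: inc_t.
by apply/negbTE; rewrite -leqNgt; apply/ltnW/inc_t.
Qed.

Lemma pairwise_ltn_map (g : nat -> nat) t : {in t &, {mono g : x y / x < y}} ->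
  pairwise ltn (map g t) = pairwise ltn t.
Proof.
move=> g_mono; rewrite pairwise_map.
by apply: (@eq_in_pairwise _ (mem t)) => [x y xt yt|]; [apply: g_mono | apply/allP].
Qed.

Lemma inj_in_surj (T : finType) (P : T -> Prop) (f : T -> T) :
  (forall x, P x -> P (f x)) -> (forall x y, P x -> P y -> f x = f y -> x = y) ->
  forall y, P y -> exists2 x, P x & f x = y.
Proof.
move=> fP f_inj y Py.
pose S := [set x | if excluded_middle_informative (P x) then true else false].
have inS x : x \in S <-> P x by rewrite inE; case: excluded_middle_informative.
have fS : f @: S = S.
  apply/eqP; rewrite eqEcard card_in_imset ?leqnn ?andbT.
    by apply/subsetP => _ /imsetP [x /inS Px ->]; apply/inS/fP.
  by move=> x1 x2 /inS P1 /inS P2; apply: f_inj.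
have : y \in f @: S by rewrite fS; apply/inS.
by case/imsetP => x /inS Px ->; exists x.
Qed.

(** * Subsequence statistics *)

(* for [2 <= size t], [is2134 t] iff [t] is order-isomorphic to 2 1 3 ... (size t) *)
Definition is2134 (t : seq nat) : bool :=
  if t is b :: a :: r then (a < b) && pairwise ltn (b :: r) else true.

Section SubsequenceStatistic.

Variable P : pred (seq nat).

Definition has_sub (k : nat) (s : seq nat) : Prop :=
  exists t, [/\ subseq t s, size t = k & P t].

Lemma has_sub_subseq k s1 s2 : subseq s1 s2 -> has_sub k s1 -> has_sub k s2.
Proof. by move=> s12 [t [ts1 szt Pt]]; exists t; split=> //; apply: subseq_trans s12. Qed.

Lemma has_sub_size k s : has_sub k s -> k <= size s.
Proof. by case=> t [ts <- _]; apply: size_subseq. Qed.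

Hypothesis P_small : forall t, size t <= 1 -> P t.

Lemma has_sub_small k s : k <= 1 -> has_sub k s <-> k <= size s.
Proof.
move=> k_le1; split; first exact: has_sub_size.
move=> k_le_s; exists (take k s); split; [exact: take_subseq | exact: size_takel |].
by apply: P_small; rewrite size_takel.
Qed.

Hypothesis P_take : forall j t, P t -> P (take j t).

Lemma has_sub_leq j k s : j <= k -> has_sub k s -> has_sub j s.
Proof.
move=> le_jk [t [ts szt Pt]]; exists (take j t); split; last exact: P_take.
  exact: subseq_trans (take_subseq _ _) ts.
by rewrite size_takel // szt.
Qed.

Lemma has_sub_rcons k s x : has_sub k.+1 (rcons s x) -> has_sub k s.
Proof.
case=> t [+ szt Pt]; rewrite -cats1 => /subseq_catP [t1 [t2 [Et t1s t2x]]].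
subst t; case: t2 t2x szt Pt => [|y [|z t2]] t2x; last by move: t2x => /=; case: (y == x).
- rewrite cats0 => szt Pt; apply: (@has_sub_leq k k.+1) => //.
  by exists t1; split.
- rewrite size_cat addn1 => -[szt1] Pt; exists t1; split=> //.
  by rewrite -(take_size_cat [:: y] szt1) -szt1; apply: P_take.
Qed.

Hypothesis P_map : forall (g : nat -> nat) t,
  {in t &, {mono g : x y / x < y}} -> P (map g t) = P t.

Lemma has_sub_map (g : nat -> nat) k s : {in s &, {mono g : x y / x < y}} ->
  has_sub k (map g s) <-> has_sub k s.
Proof.
move=> g_mono; split.
- case=> _ [/subseqP [m _ ->] szt Pt]; rewrite -map_mask in szt Pt *.
  exists (mask m s); split; [exact: mask_subseq | by rewrite size_map in szt |].
  by rewrite -(P_map (g := g)) // => x y /mem_mask xs /mem_mask ys; apply: g_mono.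
- case=> t [ts szt Pt]; exists (map g t); split; [exact: map_subseq | by rewrite size_map |].
  by rewrite (P_map (g := g)) // => x y /(mem_subseq ts) xs /(mem_subseq ts) ys; apply: g_mono.
Qed.

End SubsequenceStatistic.

Lemma is2134_small (t : seq nat) : size t <= 1 -> is2134 t.
Proof. by case: t => [|x [|]]. Qed.

Lemma is2134_take j (t : seq nat) : is2134 t -> is2134 (take j t).
Proof.
case: t j => [|b [|a r]] [|[|j]] // /andP[ab inc_br].
change ((a < b) && pairwise ltn (b :: take j r)); rewrite ab.
by apply: subseq_pairwise inc_br; rewrite /= eqxx take_subseq.
Qed.

Lemma is2134_map (g : nat -> nat) t : {in t &, {mono g : x y / x < y}} ->
  is2134 (map g t) = is2134 t.
Proof.
case: t => [|b [|a r]] // g_mono.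
have sub_br : {subset b :: r <= [:: b, a & r]}.
  by move=> x; rewrite !inE => /orP[->|->]; rewrite ?orbT.
change ((g a < g b) && pairwise ltn (map g (b :: r)) = (a < b) && pairwise ltn (b :: r)).
rewrite g_mono ?inE ?eqxx ?orbT // pairwise_ltn_map // => x y /sub_br xt /sub_br yt.
exact: g_mono.
Qed.

Notation has_inc := (has_sub (pairwise ltn)).
Notation has_2134 := (has_sub is2134).

Lemma has_inc_small k s : k <= 1 -> has_inc k s <-> k <= size s.
Proof. exact/has_sub_small/pairwise_small. Qed.

Lemma has_2134_small k s : k <= 1 -> has_2134 k s <-> k <= size s.
Proof. exact/has_sub_small/is2134_small. Qed.

Lemma has_inc_leq j k s : j <= k -> has_inc k s -> has_inc j s.
Proof. exact/has_sub_leq/pairwise_take. Qed.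

Lemma has_2134_leq j k s : j <= k -> has_2134 k s -> has_2134 j s.
Proof. exact/has_sub_leq/is2134_take. Qed.

Lemma has_2134_map (g : nat -> nat) k s : {in s &, {mono g : x y / x < y}} ->
  has_2134 k (map g s) <-> has_2134 k s.
Proof. exact/has_sub_map/is2134_map. Qed.

Lemma has_inc2_nondec s : has_inc 2 s -> ~~ pairwise gtn s.
Proof.
case=> t [+ /eqP]; case: t => [|x [|y []]] // xy_s _ /andP[/andP[lt_xy _] _].
apply/negP => /(subseq_pairwise xy_s) /andP[/andP[lt_yx _] _].
by move: lt_xy lt_yx; rewrite /gtn /=; lia.
Qed.

Lemma nondec_has_inc2 s : uniq s -> ~~ pairwise gtn s -> has_inc 2 s.
Proof.
elim: s => // x s IH /andP[xNs uniq_s] /=; rewrite negb_and.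
case/orP=> [/allPn [y ys]|/(IH uniq_s)]; last exact/has_sub_subseq/subseq_cons.
rewrite /gtn /= -leqNgt leq_eqVlt => /orP[/eqP eq_xy|lt_xy].
  by move: xNs; rewrite eq_xy ys.
exists [:: x; y]; split=> //; last by rewrite /= lt_xy.
by rewrite /= eqxx sub1seq.
Qed.

Lemma has_2134_2_noninc s : has_2134 2 s -> ~~ pairwise ltn s.
Proof.
case=> t [+ /eqP]; case: t => [|b [|a []]] // ba_s _ /andP[lt_ab _].
by apply/negP => /(subseq_pairwise ba_s) /andP[/andP[lt_ba _] _]; lia.
Qed.

Lemma has_inc_cons_max n t k : all (gtn n) t -> 2 <= k ->
  has_inc k (n :: t) <-> has_inc k t.
Proof.
move=> /allP lt_t_n le2k; split; last exact/has_sub_subseq/subseq_cons.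
case=> u [+ szu inc_u]; move: szu le2k => <- le2k.
case: u le2k inc_u => [|u [|v r]] // _ inc_uvr /=.
have [eq_un sub|_ sub] := eqVneq u n; last by exists [:: u, v & r].
have /lt_t_n : v \in t by apply: (mem_subseq sub); rewrite mem_head.
by move: inc_uvr => /andP[/andP[+ _] _]; rewrite eq_un /gtn /=; lia.
Qed.

Lemma has_2134_cons_max n t k : all (gtn n) t -> 3 <= k ->
  has_2134 k (n :: t) <-> has_2134 k t.
Proof.
move=> /allP lt_t_n le3k; split; last exact/has_sub_subseq/subseq_cons.
case=> u [+ szu u2134]; move: szu le3k => <- le3k.
case: u le3k u2134 => [|b [|a [|c r]]] // _ bac2134 /=.
have [eq_bn sub|_ sub] := eqVneq b n; last by exists [:: b, a, c & r].
have /lt_t_n : c \in t by apply: (mem_subseq sub); rewrite !inE eqxx orbT.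
by move: bac2134 => /and3P[_ /andP[+ _] _]; rewrite eq_bn /gtn /=; lia.
Qed.

Lemma has_2134_cons_max2 n t : all (gtn n) t -> 0 < size t -> has_2134 2 (n :: t).
Proof.
case: t => // x t /andP[lt_xn _] _; exists [:: n; x]; split => //.
  by rewrite /= !eqxx sub0seq.
by rewrite /= andbT.
Qed.

Lemma has_inc_rcons_max n A k : all (gtn n) A ->
  has_inc k.+1 (rcons A n) <-> has_inc k A.
Proof.
move=> /allP lt_A_n; split; first exact/has_sub_rcons/pairwise_take.
case=> t [tA szt inc_t]; exists (rcons t n); split.
- by rewrite -!cats1 cat_subseq.
- by rewrite size_rcons szt.
- by rewrite pairwise_rcons inc_t andbT; apply/allP => x /(mem_subseq tA) /lt_A_n.
Qed.

Lemma has_2134_rcons_max n A k : all (gtn n) A -> 2 <= k ->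
  has_2134 k.+1 (rcons A n) <-> has_2134 k A.
Proof.
move=> /allP lt_A_n le2k; split; first exact/has_sub_rcons/is2134_take.
case=> u [+ szu]; move: szu le2k => <- le2k.
case: u le2k => [|b [|a r]] // _ tA /andP[lt_ab inc_br].
exists [:: b, a & rcons r n]; split.
- by rewrite -!cats1 -!cat_cons cat_subseq.
- by rewrite /= size_rcons.
- rewrite /is2134 lt_ab -rcons_cons pairwise_rcons inc_br andbT.
  apply/allP => x xbr; apply: lt_A_n; apply: (mem_subseq tA).
  by move: xbr; rewrite !inE => /orP[->|->]; rewrite ?orbT.
Qed.

(* [w x y z] with [w, x < z < y] is an occurrence of 1243 or 2143 *)
Definition schroder_seq (s : seq nat) : Prop :=
  forall w x y z, subseq [:: w; x; y; z] s -> w < z -> x < z -> z < y -> False.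

Lemma schroder_seq_subseq s1 s2 : subseq s1 s2 -> schroder_seq s2 -> schroder_seq s1.
Proof. by move=> s12 sch2 w x y z sub; apply: sch2; apply: subseq_trans s12. Qed.

Lemma schroder_seq_cons_max n t : all (gtn n) t -> schroder_seq t -> schroder_seq (n :: t).
Proof.
move=> /allP lt_t_n scht w x y z /=; have [-> sub|_ sub] := eqVneq w n; last exact: scht.
have /lt_t_n : z \in t by apply: (mem_subseq sub); rewrite !inE eqxx !orbT.
by rewrite /gtn /=; lia.
Qed.

Lemma schroder_seq_inc s : pairwise ltn s -> schroder_seq s.
Proof.
move=> inc_s w x y z /subseq_pairwise /(_ inc_s) /and4P[_ _ /andP[lt_yz _] _].
by lia.
Qed.

Lemma schroder_seq_map (g : nat -> nat) s : {in s &, {mono g : x y / x < y}} ->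
  schroder_seq s -> schroder_seq (map g s).
Proof.
move=> g_mono sch_s w' x' y' z' /subseqP [m _]; rewrite -map_mask.
have : subseq (mask m s) s := mask_subseq m s.
case: (mask m s) => [|w [|x [|y [|z []]]]] // sub [-> -> -> ->].
have in_s : {subset [:: w; x; y; z] <= s} := mem_subseq sub.
by rewrite !g_mono ?in_s ?inE ?eqxx ?orbT //; apply: sch_s sub.
Qed.

(** * Cutting at the maximum *)

Definition max_cut (A : seq nat) (n : nat) (B : seq nat) (a1 : nat) : Prop :=
  [/\ uniq (A ++ n :: B), all (gtn n) (A ++ B), a1 \in A & all (leq a1) A].

Definition lies_below (B A : seq nat) (a1 : nat) : Prop :=
  {in B & A, forall b a, a != a1 -> b < a}.

Lemma lies_below_min B A a1 b a : lies_below B A a1 ->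
  b \in B -> a \in A -> a < b -> a = a1.
Proof.
move=> below bB aA lt_ab; apply/eqP; apply: contraTT lt_ab => /(below b a bB aA).
by rewrite -leqNgt => /ltnW.
Qed.

Definition relab (a h x : nat) : nat := if x == a then h else x.

Section MaxCut.

Variables (A B : seq nat) (n a1 : nat).
Hypothesis cut : max_cut A n B a1.

Lemma max_cut_ltA : all (gtn n) A.
Proof. by case: cut => _ + _ _; rewrite all_cat => /andP[]. Qed.

Lemma max_cut_ltB : all (gtn n) B.
Proof. by case: cut => _ + _ _; rewrite all_cat => /andP[]. Qed.

Lemma max_cut_le x : x \in A ++ n :: B -> x <= n.
Proof.
by rewrite mem_cat inE => /or3P[/(allP max_cut_ltA)/ltnW|/eqP->|/(allP max_cut_ltB)/ltnW].
Qed.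

Lemma max_cut_uniqA : uniq A.
Proof. by case: cut; rewrite cat_uniq => /andP[]. Qed.

Lemma max_cut_disjoint x : x \in A -> x \notin B.
Proof.
case: cut; rewrite cat_uniq => /and3P[_ /hasPn disj _] _ _ _ xA.
by apply/negP => xB; have := disj x; rewrite inE xB orbT xA => /(_ isT).
Qed.

Lemma max_cut_uniq_a1B : uniq (a1 :: B).
Proof.
case: cut; rewrite cat_uniq cons_uniq => /and4P[_ _ _ uniqB] _ a1A _.
by rewrite cons_uniq uniqB max_cut_disjoint.
Qed.

Lemma max_cut_notin : n \notin A.
Proof. by apply/negP => /(allP max_cut_ltA); rewrite /gtn /= ltnn. Qed.

Lemma max_cut_sub_a1B : subseq (a1 :: B) (A ++ n :: B).
Proof.
case: cut => _ _ /splitPr [A1 A2] _; rewrite -catA.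
apply: subseq_trans (suffix_subseq A1 _); rewrite /= eqxx.
exact: subseq_trans (suffix_subseq [:: n] B) (suffix_subseq A2 (n :: B)).
Qed.

Lemma max_cut_sub_rcons : subseq (rcons A n) (A ++ n :: B).
Proof. by rewrite -cats1 subseq_cat2l /= eqxx sub0seq. Qed.

Lemma max_cut_lies_below : schroder_seq (A ++ n :: B) -> lies_below B A a1.
Proof.
case: cut => _ _ a1A /allP minA sch b a bB aA neq_aa1.
have neq_ab : b != a by apply: contraTneq bB => ->; apply: max_cut_disjoint.
rewrite ltn_neqAle neq_ab leqNgt /=; apply/negP => lt_ab.
have lt_a1a : a1 < a by rewrite ltn_neqAle eq_sym neq_aa1 minA.
have lt_bn : b < n := allP max_cut_ltB b bB.
have sub_nb : subseq [:: n; b] (n :: B) by rewrite /= eqxx sub1seq.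
have [sub2|sub2] := subseq_pair_cases a1A aA (negbT (ltn_eqF lt_a1a)).
- by apply: (sch a1 a n b (cat_subseq sub2 sub_nb)); lia.
- by apply: (sch a a1 n b (cat_subseq sub2 sub_nb)); lia.
Qed.

Lemma schroder_seq_cut : schroder_seq (A ++ n :: B) <->
  [/\ lies_below B A a1, schroder_seq A & schroder_seq (a1 :: B)].
Proof.
split=> [sch | [below schA schB]].
  split; first exact: max_cut_lies_below.
    exact: schroder_seq_subseq (prefix_subseq _ _) sch.
  exact: schroder_seq_subseq max_cut_sub_a1B sch.
move=> w x y z sub lt_wz lt_xz lt_zy.
have /(subseq_uniq sub) uniq_wxyz : uniq (A ++ n :: B) by case: cut.
have /max_cut_le le_yn : y \in A ++ n :: B by apply: (mem_subseq sub); rewrite !inE eqxx !orbT.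
have [t1 [t2 [Et t1A t2nB]]] := subseq_catP sub.
(* an entry of A below an entry z of B is a1, so at most w lies in A *)
have dropn u r : u < n -> subseq (u :: r) (n :: B) -> subseq (u :: r) B.
  by move=> /ltn_eqF /= ->.
have zB : z \in t2 -> z \in B.
  by move=> /(mem_subseq t2nB); rewrite inE => /orP[/eqP eq_zn|//]; lia.
have eq_a1 u : u \in t1 -> u < z -> z \in t2 -> u = a1.
  by move=> /(mem_subseq t1A) uA lt_uz /zB zB'; apply: lies_below_min below zB' uA lt_uz.
case: t1 Et t1A eq_a1 => [|w1 [|x1 [|y1 [|z1 [|? ?]]]]] //= Et.
- subst t2 => _ _; apply: (schB w x y z) => //.
  by apply: subseq_trans (subseq_cons _ _); apply: dropn t2nB; lia.
- case: Et => <- Et _ /(_ w (mem_head _ _) lt_wz); subst t2.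
  rewrite !inE eqxx !orbT => /(_ isT) eq_wa1; subst w.
  apply: (schB a1 x y z) => //; rewrite /= eqxx; apply: dropn t2nB; lia.
- case: Et => <- <- Et _ eq_a1; subst t2.
  have zt : z \in [:: y; z] by rewrite !inE eqxx orbT.
  have xt : x \in [:: w; x] by rewrite !inE eqxx orbT.
  rewrite (eq_a1 w (mem_head _ _) lt_wz zt) (eq_a1 x xt lt_xz zt) in uniq_wxyz.
  by rewrite /= inE eqxx in uniq_wxyz.
- case: Et => <- <- <- Et _ eq_a1; subst t2.
  have zt : z \in [:: z] by rewrite mem_head.
  have xt : x \in [:: w; x; y] by rewrite !inE eqxx orbT.
  rewrite (eq_a1 w (mem_head _ _) lt_wz zt) (eq_a1 x xt lt_xz zt) in uniq_wxyz.
  by rewrite /= inE eqxx in uniq_wxyz.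
- by case: Et => <- <- <- <- _ subA _; apply: schA subA _ _ _.
Qed.

Hypothesis below : lies_below B A a1.

Lemma inc_subseq_cut t : pairwise ltn t -> subseq t (A ++ n :: B) ->
  subseq t (rcons A n) \/ subseq t (a1 :: B).
Proof.
move=> inc_t /subseq_catP [t1 [t2 [Et t1A]]]; subst t.
move: inc_t; rewrite pairwise_cat => /and3P[lt12 inc1 inc2].
case: t2 lt12 inc2 => [|u r] lt12 inc2 sub2.
  by left; rewrite cats0; apply: subseq_trans t1A (subseq_rcons _ _).
case/subseq_consP: sub2 => [[eq_un rB]|urB].
  subst u; case: r lt12 rB inc2 => [_ _ _|v r _ vrB /andP[/andP[lt_nv _] _]].
    by left; rewrite cats1 -!cats1 subseq_cat2r.
  have /(allP max_cut_ltB) : v \in B by apply: (mem_subseq vrB); rewrite mem_head.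
  by move: lt_nv; rewrite /gtn /ltn /=; lia.
have uB : u \in B by apply: (mem_subseq urB); rewrite mem_head.
have eq_a1 x : x \in t1 -> x = a1.
  move=> xt1; apply: (lies_below_min below uB (mem_subseq t1A xt1)).
  by move: lt12; rewrite allrel_consr => /andP[/allP /(_ x xt1)].
right; case: t1 {lt12} t1A inc1 eq_a1 => [_ _ _|x [|y t1]] /=.
- exact: subseq_trans urB (subseq_cons _ _).
- by move=> _ _ /(_ x (mem_head _ _)) ->; rewrite eqxx.
- move=> _ /andP[/andP[lt_xy _] _] eq_a1.
  have yt : y \in [:: x, y & t1] by rewrite !inE eqxx orbT.
  have := eq_a1 x (mem_head _ _); have := eq_a1 y yt.
  by move: lt_xy; rewrite /ltn /=; lia.
Qed.

Lemma is2134_subseq_cut t : is2134 t -> 2 < size t -> subseq t (A ++ n :: B) ->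
  subseq t (rcons A n) \/ subseq t (a1 :: B).
Proof.
case: t => [|b [|a [|c r]]] // /andP[lt_ab inc_bcr] _ /subseq_catP [t1 [t2 [Et t1A]]].
have [lt_b_cr inc_cr] : all (ltn b) (c :: r) /\ pairwise ltn (c :: r) by apply/andP.
have lt_bc : b < c by case/andP: lt_b_cr.
have inc_acr : pairwise ltn [:: a, c & r].
  by rewrite pairwise_cons inc_cr andbT; apply: sub_all lt_b_cr => x; rewrite /ltn /=; lia.
case: t2 Et => [|u r2] Et.
  by left; rewrite Et cats0; apply: subseq_trans t1A (subseq_rcons _ _).
case/subseq_consP => [[eq_un r2B]|ur2B].
  subst u; case: r2 Et r2B => [Et _|v r2 Et vr2B].
    by left; rewrite Et cats1 -!cats1 subseq_cat2r.
  have /(allP max_cut_ltB) : v \in B by apply: (mem_subseq vr2B); rewrite mem_head.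
  case: t1 Et {t1A} => [[eq_bn _ Er]|x t1 [_ Et]].
    have /(allP max_cut_ltB) : c \in B by apply: (mem_subseq vr2B); rewrite -Er !inE eqxx orbT.
    by rewrite /gtn /=; lia.
  move: inc_acr; rewrite Et pairwise_cat => /and3P[_ _ /andP[/andP[lt_nv _] _]].
  by move: lt_nv; rewrite /gtn /ltn /=; lia.
have uB : u \in B by apply: (mem_subseq ur2B); rewrite mem_head.
right; case: t1 Et t1A => [->|x [|y t1]] //.
- by move=> _; apply: subseq_trans ur2B (subseq_cons _ _).
- case=> <- -> Ecr; rewrite sub1seq => bA.
  have cB : c \in B by apply: (mem_subseq ur2B); rewrite -Ecr !inE eqxx orbT.
  by rewrite (lies_below_min below cB bA lt_bc) /= eqxx Ecr.
- case=> <- <- Ecr t1A; exfalso.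
  have ucr : u \in c :: r by rewrite Ecr mem_cat mem_head orbT.
  have lt_bu : b < u := allP lt_b_cr u ucr.
  have bA : b \in A by apply: (mem_subseq t1A); rewrite mem_head.
  have aA : a \in A by apply: (mem_subseq t1A); rewrite !inE eqxx orbT.
  have := lies_below_min below uB bA lt_bu; case: cut => _ _ _ /allP /(_ a aA).
  by rewrite /leq; lia.
Qed.

Lemma has_inc_cut k :
  has_inc k.+1 (A ++ n :: B) <-> has_inc k A \/ has_inc k.+1 (a1 :: B).
Proof.
rewrite -(has_inc_rcons_max k max_cut_ltA); split.
  case=> t [sub szt inc_t].
  by have [tAn|ta1B] := inc_subseq_cut inc_t sub; [left | right]; exists t.
by case; apply: has_sub_subseq; [exact: max_cut_sub_rcons | exact: max_cut_sub_a1B].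
Qed.

Lemma has_2134_cut k : B != [::] \/ has_2134 2 A ->
  has_2134 k.+1 (A ++ n :: B) <-> has_2134 k A \/ has_2134 k.+1 (a1 :: B).
Proof.
move=> nondeg; have [le_k1|lt1k] := leqP k 1.
  have A_ne : 0 < size A by case: cut => _ _ a1A _; case: (A) a1A.
  split=> _; first by left; apply/(has_2134_small _ le_k1); lia.
  case: k le_k1 => [|[|//]] _; first by apply/has_2134_small; rewrite // size_cat addnS.
  case: nondeg => [B_ne|A2]; last exact: has_sub_subseq (prefix_subseq _ _) A2.
  apply: has_sub_subseq (suffix_subseq A (n :: B)) _.
  by apply: has_2134_cons_max2 max_cut_ltB _; rewrite lt0n size_eq0.
rewrite -(has_2134_rcons_max max_cut_ltA lt1k); split.
  case=> t [sub szt t2134]; have lt2t : 2 < size t by rewrite szt.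
  by have [tAn|ta1B] := is2134_subseq_cut t2134 lt2t sub; [left | right]; exists t.
by case; apply: has_sub_subseq; [exact: max_cut_sub_rcons | exact: max_cut_sub_a1B].
Qed.

Section Glue.

Variables (oA B' : seq nat) (h : nat).
Hypotheses (perm_oA : perm_eq oA A) (perm_hB' : perm_eq (h :: B') (a1 :: B)).

Lemma glue_lt a : a \in A -> a != a1 -> h < a.
Proof.
move=> aA neq_aa1; have : h \in a1 :: B by rewrite -(perm_mem perm_hB') mem_head.
rewrite inE => /orP[/eqP ->|hB]; last exact: below.
by case: cut => _ _ _ /allP /(_ a aA); rewrite leq_eqVlt eq_sym (negbTE neq_aa1).
Qed.

Lemma relab_mono : {in oA &, {mono relab a1 h : x y / x < y}}.
Proof.
move=> x y; rewrite !(perm_mem perm_oA) /relab => xA yA.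
have [_ _ _ /allP minA] := cut.
have [->|neq_xa1] := eqVneq x a1; have [->|neq_ya1] := eqVneq y a1.
- by rewrite !ltnn.
- by rewrite glue_lt // ltn_neqAle eq_sym neq_ya1 minA.
- by rewrite ltnNge (ltnW (glue_lt xA neq_xa1)) ltnNge minA.
- by [].
Qed.

Lemma relabK : map (relab h a1) (map (relab a1 h) oA) = oA.
Proof.
rewrite -map_comp; apply: map_id_in => x; rewrite (perm_mem perm_oA) /= /relab => xA.
have [->|neq_xa1] := eqVneq x a1; first by rewrite eqxx.
by rewrite (gtn_eqF (glue_lt xA neq_xa1)).
Qed.

Lemma glue_perm : perm_eq (map (relab a1 h) oA ++ n :: B') (A ++ n :: B).
Proof.
have a1oA : a1 \in oA by rewrite (perm_mem perm_oA); case: cut.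
have uniq_oA : uniq oA by rewrite (perm_uniq perm_oA) max_cut_uniqA.
have remE : map (relab a1 h) (rem a1 oA) = rem a1 oA.
  apply: map_id_in => x; rewrite (mem_rem_uniq _ uniq_oA) inE => /andP[neq_xa1 _].
  by rewrite /relab (negbTE neq_xa1).
have A'E : perm_eq (map (relab a1 h) oA) (h :: rem a1 oA).
  have relab_a1 : relab a1 h a1 = h by rewrite /relab eqxx.
  by have := perm_map (relab a1 h) (perm_to_rem a1oA); rewrite /= remE relab_a1.
apply/seq.permP => p; have /seq.permP/(_ p) := A'E; have /seq.permP/(_ p) := perm_hB'.
have /seq.permP/(_ p) := perm_oA; have /seq.permP/(_ p) := perm_to_rem a1oA.
by rewrite !count_cat /=; lia.
Qed.

Lemma glue_cut : max_cut (map (relab a1 h) oA) n B' h.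
Proof.
have uniq_out : uniq (map (relab a1 h) oA ++ n :: B').
  by rewrite (perm_uniq glue_perm); case: cut.
have a1oA : a1 \in oA by rewrite (perm_mem perm_oA); case: cut.
split=> //.
- apply/allP => x x_out; have : x \in A ++ n :: B.
    rewrite -(perm_mem glue_perm) mem_cat inE.
    by move: x_out; rewrite mem_cat => /orP[->|->]; rewrite ?orbT.
  move/max_cut_le; rewrite leq_eqVlt => /orP[/eqP eq_xn|//].
  by move: uniq_out; rewrite -cat1s uniq_catCA cat1s cons_uniq -eq_xn x_out.
- by apply/mapP; exists a1; rewrite // /relab eqxx.
- apply/allP => _ /mapP [y yoA ->]; rewrite /relab; case: (eqVneq y a1) => // neq_ya1.
  by apply: ltnW; apply: glue_lt neq_ya1; rewrite -(perm_mem perm_oA).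
Qed.

Lemma glue_below : lies_below B' (map (relab a1 h) oA) h.
Proof.
move=> b _ bB' /mapP [y yoA ->]; rewrite /relab.
case: (eqVneq y a1) => [_|neq_ya1]; first by rewrite eqxx.
move=> _; have yA : y \in A by rewrite -(perm_mem perm_oA).
have : b \in a1 :: B by rewrite -(perm_mem perm_hB') inE bB' orbT.
rewrite inE => /orP[/eqP ->|bB]; last exact: below.
by case: cut => _ _ _ /allP /(_ y yA); rewrite leq_eqVlt eq_sym (negbTE neq_ya1).
Qed.

End Glue.

End MaxCut.

(** * The bijection on sequences *)

Definition maxl (s : seq nat) : nat := \max_(x <- s) x.

Lemma maxl_mem s : s != [::] -> maxl s \in s.
Proof.
rewrite /maxl; elim: s => // x s IH _; rewrite big_cons inE.
case: s IH => [_|y s IH]; first by rewrite big_nil maxn0 eqxx.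
by rewrite /maxn; case: ifP => _; rewrite ?eqxx ?IH ?orbT.
Qed.

Definition minl (s : seq nat) : nat := foldr minn (head 0 s) s.

Lemma minl_mem s : s != [::] -> minl s \in s.
Proof.
case: s => // y s _; rewrite /minl /=.
have : foldr minn y s \in y :: s.
  elim: s => [|x s IH] /=; first exact: mem_head.
  rewrite /minn; case: ifP => _; first by rewrite !inE eqxx orbT.
  by move: IH; rewrite !inE => /orP[->|->]; rewrite ?orbT.
by rewrite /minn; case: ifP => _ // _; rewrite mem_head.
Qed.

Lemma minl_le s : all (leq (minl s)) s.
Proof.
apply/allP; rewrite /minl; move: (head 0 s) => d.
elim: s => // x s IH y; rewrite inE /= => /orP[/eqP ->|/IH]; first exact: geq_minl.
exact: leq_trans (geq_minr _ _).
Qed.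

Definition omega_step (rec : seq nat -> seq nat) (s : seq nat) : seq nat :=
  if pairwise gtn s then rev s else
  let n := maxl s in
  let A := take (index n s) s in
  let B := drop (index n s).+1 s in
  if A is [::] then n :: rec B else
  if (B == [::]) && pairwise gtn A then n :: rev A else
  let a1 := minl A in
  if rec (a1 :: B) is h :: B' then map (relab a1 h) (rec A) ++ n :: B' else s.

Variant omega_step_spec (rec : seq nat -> seq nat) (s : seq nat) : seq nat -> Prop :=
| OmegaDec of pairwise gtn s : omega_step_spec rec s (rev s)
| OmegaFirst n B of maxl s = n & s = n :: B & all (gtn n) B & ~~ pairwise gtn B :
    omega_step_spec rec s (n :: rec B)
| OmegaLast n A of maxl s = n & s = rcons A n & all (gtn n) A & A != [::]
    & pairwise gtn A : omega_step_spec rec s (n :: rev A)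
| OmegaMid n A B a1 h B' of maxl s = n & s = A ++ n :: B & max_cut A n B a1
    & (B != [::]) || ~~ pairwise gtn A & rec (a1 :: B) = h :: B' :
    omega_step_spec rec s (map (relab a1 h) (rec A) ++ n :: B').

Lemma omega_stepP rec s : (forall t, uniq t -> size (rec t) = size t) -> uniq s ->
  omega_step_spec rec s (omega_step rec s).
Proof.
move=> size_rec uniq_s; rewrite /omega_step.
case: ifP => [dec|/negbT nondec]; first exact: OmegaDec.
have ns : maxl s \in s by apply/maxl_mem; apply: contraNneq nondec => ->.
move: (cat_take_index_drop ns); move En: (maxl s) => n.
move EA: (take _ s) => A; move EB: (drop _ s) => B sE; subst s.
have lt_AB : all (gtn n) (A ++ B).
  apply/allP => x xAB; rewrite /gtn /= ltn_neqAle -En leq_bigmax_seq ?andbT //.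
    apply: contraTneq xAB => ->; rewrite En.
    by move: uniq_s; rewrite -cat1s uniq_catCA cat1s cons_uniq => /andP[].
  by move: xAB; rewrite !mem_cat inE => /orP[->|->]; rewrite ?orbT.
case: A {EA EB ns} nondec En lt_AB uniq_s => [|a A] nondec En lt_AB uniq_s.
  by apply: OmegaFirst => //; move: nondec; rewrite /= lt_AB.
case: ifP => [/andP[/eqP B0 decA]|nondeg].
  subst B; rewrite cats0 in lt_AB; rewrite cats1 in nondec En *.
  exact: OmegaLast.
have cut : max_cut (a :: A) n B (minl (a :: A)).
  by split; rewrite // ?minl_le // minl_mem.
case E: (rec _) => [|h B'].
  by move: E => /(congr1 size); rewrite size_rec //; apply: max_cut_uniq_a1B cut.
by apply: OmegaMid E; rewrite // -negb_and nondeg.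
Qed.

(* [f] is fuel: [omega_seq f s] is the bijection when [size s <= f]; the
   fallback [s] of [omega_step] is never reached on duplicate-free input. *)
Fixpoint omega_seq (f : nat) (s : seq nat) : seq nat :=
  if f is f'.+1 then omega_step (omega_seq f') s else s.

Lemma size_omega_seq f s : uniq s -> size (omega_seq f s) = size s.
Proof.
elim: f s => // f IH s uniq_s /=; case: (omega_stepP IH uniq_s) (uniq_s)
  => [_ _|n B _ -> _ _ /andP[_ uniq_B]|n A _ -> _ _ _ _|n A B a1 h B' _ -> cut _ E _].
- by rewrite size_rev.
- by rewrite /= IH.
- by rewrite size_rcons /= size_rev.
- rewrite !size_cat /= size_map IH ?(max_cut_uniqA cut) //.
  by have := IH _ (max_cut_uniq_a1B cut); rewrite E => -[->].
Qed.

Definition omega_inv (s t : seq nat) : Prop :=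
  [/\ perm_eq t s, schroder_seq t & forall k, has_inc k s <-> has_2134 k t].

Lemma has_inc_2134_small k s t : k <= 1 -> perm_eq t s -> has_inc k s <-> has_2134 k t.
Proof. by move=> le_k1 pts; rewrite has_inc_small // has_2134_small // (perm_size pts). Qed.

Lemma omega_inv_dec s : pairwise gtn s -> omega_inv s (rev s).
Proof.
move=> dec_s; have inc_rs : pairwise ltn (rev s) by rewrite pairwise_rev.
have p_rs : perm_eq (rev s) s by rewrite perm_rev.
split=> [//||k]; first exact: schroder_seq_inc.
have [le_k1|lt1k] := leqP k 1; first exact: has_inc_2134_small.
split=> [/(has_inc_leq lt1k) /has_inc2_nondec|/(has_2134_leq lt1k) /has_2134_2_noninc].
  by rewrite dec_s.
by rewrite inc_rs.
Qed.

Lemma omega_inv_last n A : all (gtn n) A -> pairwise gtn A -> A != [::] ->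
  omega_inv (rcons A n) (n :: rev A).
Proof.
move=> lt_A_n dec_A A_ne; have inc_rA : pairwise ltn (rev A) by rewrite pairwise_rev.
have lt_rA_n : all (gtn n) (rev A) by rewrite all_rev.
have sz_A : 0 < size A by rewrite lt0n size_eq0.
have p_out : perm_eq (n :: rev A) (rcons A n).
  by rewrite perm_sym perm_rcons perm_cons perm_sym perm_rev.
split=> [//||k]; first exact/schroder_seq_cons_max/schroder_seq_inc.
have [le_k1|lt1k] := leqP k 1; first exact: has_inc_2134_small.
case: k lt1k => [|[|[|k]]] // _.
  split=> _; first by apply: has_2134_cons_max2; rewrite ?size_rev.
  by apply/has_inc_rcons_max/has_inc_small.
rewrite has_inc_rcons_max // has_2134_cons_max //.
split=> [/(has_inc_leq (isT : 2 <= k.+2)) /has_inc2_nondec|/(has_2134_leq (isT : 2 <= k.+3))].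
  by rewrite dec_A.
by move/has_2134_2_noninc; rewrite inc_rA.
Qed.

Lemma omega_inv_first n B oB : all (gtn n) B -> uniq B -> ~~ pairwise gtn B ->
  omega_inv B oB -> omega_inv (n :: B) (n :: oB).
Proof.
move=> lt_B_n uniq_B nondec_B [pB schB statB].
have lt_oB_n : all (gtn n) oB by rewrite (perm_all _ pB).
have sz_oB : 0 < size oB.
  by rewrite (perm_size pB) lt0n size_eq0; apply: contraNneq nondec_B => ->.
split=> [||k]; [by rewrite perm_cons | exact: schroder_seq_cons_max |].
have [le_k1|lt1k] := leqP k 1; first by apply: has_inc_2134_small; rewrite ?perm_cons.
case: k lt1k => [|[|[|k]]] // _; last by rewrite has_inc_cons_max // has_2134_cons_max.
split=> _; first exact: has_2134_cons_max2.
exact: has_sub_subseq (subseq_cons _ _) (nondec_has_inc2 uniq_B nondec_B).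
Qed.

Lemma omega_inv_mid A n B a1 oA h B' :
  max_cut A n B a1 -> schroder_seq (A ++ n :: B) -> (B != [::]) || ~~ pairwise gtn A ->
  omega_inv A oA -> omega_inv (a1 :: B) (h :: B') ->
  omega_inv (A ++ n :: B) (map (relab a1 h) oA ++ n :: B').
Proof.
move=> cut sch nondeg [pA schA statA] [pB schB statB].
have [below _ _] := (schroder_seq_cut cut).1 sch.
have cut' := glue_cut cut below pA pB.
have below' := glue_below cut below pA pB.
have mono := relab_mono cut below pA pB.
have nondeg' : B' != [::] \/ has_2134 2 (map (relab a1 h) oA).
  case/orP: nondeg => [B_ne|nondec_A]; [left | right].
    by have /= [sz_B'] := perm_size pB; rewrite -size_eq0 sz_B' size_eq0.
  by apply/(has_2134_map _ mono)/statA/nondec_has_inc2; first exact: max_cut_uniqA cut.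
split; first exact: glue_perm.
  by apply/(schroder_seq_cut cut'); split=> //; apply: schroder_seq_map.
case=> [|k]; first by apply: has_inc_2134_small => //; apply: glue_perm.
rewrite (has_inc_cut cut below) statA statB (has_2134_cut cut' below' k nondeg').
by rewrite (has_2134_map _ mono).
Qed.

Definition admissible (f : nat) (s : seq nat) : Prop :=
  [/\ size s <= f, uniq s & schroder_seq s].

Lemma admissible_cons f n B : admissible f.+1 (n :: B) -> admissible f B.
Proof.
case=> sz /andP[_ uniq_B] sch; split=> //.
exact: schroder_seq_subseq (subseq_cons _ _) sch.
Qed.

Lemma admissible_cut f A n B a1 : max_cut A n B a1 -> admissible f.+1 (A ++ n :: B) ->
  admissible f A /\ admissible f (a1 :: B).
Proof.
move=> cut [sz _ /(schroder_seq_cut cut) [_ schA schB]].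
have : 0 < size A by case: cut => _ _ a1A _; case: (A) a1A.
move: sz; rewrite size_cat /= => sz lt0A.
rewrite /admissible /=; split; split=> //;
  first [lia | exact: max_cut_uniqA cut | exact: max_cut_uniq_a1B cut].
Qed.

Lemma omega_seqP f s : admissible f s -> omega_inv s (omega_seq f s).
Proof.
elim: f s => [|f IH] s [sz_s uniq_s sch_s].
  by move: sz_s; rewrite leqn0 size_eq0 => /eqP ->; apply: omega_inv_dec.
rewrite /=; case: (omega_stepP (@size_omega_seq f) uniq_s)
  => [|n B _ sE lt_B_n nondec_B|n A _ sE lt_A_n A_ne dec_A|n A B a1 h B' _ sE cut nondeg E].
- exact: omega_inv_dec.
- have adm_B : admissible f B by apply: (@admissible_cons _ n); rewrite -sE.
  rewrite sE; apply: omega_inv_first => //; [by case: adm_B | exact: IH].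
- by rewrite sE; apply: omega_inv_last.
- have adm_s : admissible f.+1 (A ++ n :: B) by rewrite -sE.
  have [adm_A adm_a1B] := admissible_cut cut adm_s.
  rewrite sE; apply: omega_inv_mid => //; first by case: adm_s.
    exact: IH.
  by rewrite -E; apply: IH.
Qed.

Lemma max_cut_head A n B a1 X : max_cut A n B a1 -> A ++ n :: B <> n :: X.
Proof.
move=> cut; have := max_cut_notin cut; case: cut => _ _ + _.
by case: A => // a A _; rewrite inE => /norP[/eqP neq_na _] [eq_an _]; apply: neq_na.
Qed.

Lemma max_cut_inj A1 B1 h1 A2 B2 h2 n : max_cut A1 n B1 h1 -> max_cut A2 n B2 h2 ->
  A1 ++ n :: B1 = A2 ++ n :: B2 -> [/\ A1 = A2, B1 = B2 & h1 = h2].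
Proof.
move=> cut1 cut2 E; have nA1 := max_cut_notin cut1; have nA2 := max_cut_notin cut2.
have eq_sz : size A1 = size A2.
  by have := congr1 (index n) E; rewrite !index_cat (negbTE nA1) (negbTE nA2) /= eqxx !addn0.
move/eqP: E; rewrite eqseq_cat // => /andP[/eqP eq_A /eqP [eq_B]]; subst A2 B2.
case: cut1 cut2 => _ _ h1A /allP min1 [_ _ h2A /allP min2].
by split=> //; apply/eqP; rewrite eqn_leq min1 ?min2.
Qed.

Lemma omega_seq_mid f A n B a1 h B' : max_cut A n B a1 ->
  admissible f.+1 (A ++ n :: B) -> omega_seq f (a1 :: B) = h :: B' ->
  max_cut (map (relab a1 h) (omega_seq f A)) n B' h
  /\ map (relab h a1) (map (relab a1 h) (omega_seq f A)) = omega_seq f A.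
Proof.
move=> cut adm E; have [_ _ /(schroder_seq_cut cut) [below _ _]] := adm.
have [adm_A adm_a1B] := admissible_cut cut adm.
have [pA _ _] := omega_seqP adm_A; have [+ _ _] := omega_seqP adm_a1B; rewrite E => pB.
by split; [exact (glue_cut cut below pA pB) | exact (relabK cut below pA pB)].
Qed.

Lemma omega_seq_decP f s : admissible f s ->
  pairwise gtn s <-> ~ has_2134 2 (omega_seq f s).
Proof.
move=> adm; have [_ uniq_s _] := adm; have [_ _ stat] := omega_seqP adm.
rewrite -stat; split=> [dec /has_inc2_nondec|no_inc2]; first by rewrite dec.
by apply/negPn/negP => /(nondec_has_inc2 uniq_s).
Qed.

Lemma omega_seq_maxl f s1 s2 : admissible f s1 -> admissible f s2 ->
  omega_seq f s1 = omega_seq f s2 -> maxl s1 = maxl s2.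
Proof.
move=> adm1 adm2 E; have [p1 _ _] := omega_seqP adm1; have [p2 _ _] := omega_seqP adm2.
by apply: perm_big; rewrite perm_sym in p1; apply: perm_trans p1 _; rewrite E.
Qed.

Lemma omega_seq_dec_eq f s1 s2 : admissible f s1 -> admissible f s2 ->
  omega_seq f s1 = omega_seq f s2 -> pairwise gtn s1 = pairwise gtn s2.
Proof.
move=> adm1 adm2 E; apply/idP/idP.
  by move/(omega_seq_decP adm1); rewrite E => /(omega_seq_decP adm2).
by move/(omega_seq_decP adm2); rewrite -E => /(omega_seq_decP adm1).
Qed.

Lemma omega_seq_nondec f s : admissible f s -> ~~ pairwise gtn s ->
  ~~ pairwise ltn (omega_seq f s).
Proof.
move=> adm nondec; have [_ _ stat] := omega_seqP adm.
apply: has_2134_2_noninc; apply/stat; apply: nondec_has_inc2 nondec.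
by case: adm.
Qed.

Lemma omega_seq_inj f s1 s2 : admissible f s1 -> admissible f s2 ->
  omega_seq f s1 = omega_seq f s2 -> s1 = s2.
Proof.
elim: f s1 s2 => [|f IH] s1 s2 adm1 adm2 E.
  by case: adm1 adm2 => + _ _ [+ _ _]; rewrite !leqn0 !size_eq0 => /eqP-> /eqP->.
have eq_max := omega_seq_maxl adm1 adm2 E; have eq_dec := omega_seq_dec_eq adm1 adm2 E.
have [dec1|nd1] := boolP (pairwise gtn s1).
  by move: E; rewrite /= /omega_step -eq_dec dec1 => /(congr1 rev); rewrite !revK.
have nd2 : ~~ pairwise gtn s2 by rewrite -eq_dec.
have [_ uniq1 _] := adm1; have [_ uniq2 _] := adm2.
(* The output of OmegaMid does not start with the maximum, that of OmegaLast
   ends increasingly and that of OmegaFirst does not. *)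
move: E adm1 adm2 => /=.
case: (omega_stepP (@size_omega_seq f) uniq1)
  => [dec1|n1 B1 En1 Es1 _ ndB1|n1 A1 En1 Es1 _ _ dA1|n1 A1 B1 a1 h1 C1 En1 Es1 cut1 _ F1];
case: (omega_stepP (@size_omega_seq f) uniq2)
  => [dec2|n2 B2 En2 Es2 _ ndB2|n2 A2 En2 Es2 _ _ dA2|n2 A2 B2 a2 h2 C2 En2 Es2 cut2 _ F2];
try by [rewrite dec1 in nd1 | rewrite dec2 in nd2].
all: have eq_n : n1 = n2 by rewrite -En1 -En2.
all: subst s1 s2 n2 => E adm1 adm2.
- by case: E => /(IH _ _ (admissible_cons adm1) (admissible_cons adm2)) ->.
- case: E => E; have := omega_seq_nondec (admissible_cons adm1) ndB1.
  by rewrite E pairwise_rev dA2.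
- by case: (max_cut_head (omega_seq_mid cut2 adm2 F2).1 (esym E)).
- case: E => E; have := omega_seq_nondec (admissible_cons adm2) ndB2.
  by rewrite -E pairwise_rev dA1.
- by case: E => /(congr1 rev); rewrite !revK => ->.
- by case: (max_cut_head (omega_seq_mid cut2 adm2 F2).1 (esym E)).
- by case: (max_cut_head (omega_seq_mid cut1 adm1 F1).1 E).
- by case: (max_cut_head (omega_seq_mid cut1 adm1 F1).1 E).
have [cut1' K1] := omega_seq_mid cut1 adm1 F1.
have [cut2' K2] := omega_seq_mid cut2 adm2 F2.
have [EA EC Eh] := max_cut_inj cut1' cut2' E; subst h2 C2.
have [adm_A1 adm_a1B1] := admissible_cut cut1 adm1.
have [adm_A2 adm_a2B2] := admissible_cut cut2 adm2.
case: (IH _ _ adm_a1B1 adm_a2B2 (etrans F1 (esym F2))) => eq_a EB; subst a2 B2.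
by rewrite (IH A1 A2) // -K1 -K2 EA.
Qed.

(** * Permutations *)

Definition occurs (s tau : seq nat) : Prop :=
  exists t, [/\ subseq t s, size t = size tau &
    forall a b, a < size tau -> b < size tau ->
      (nth 0 t a < nth 0 t b) = (nth 0 tau a < nth 0 tau b)].

Lemma occurs_inc_pat k s : occurs s (inc_pat k) <-> has_inc k s.
Proof.
rewrite /occurs /inc_pat size_iota; split.
  case=> t [ts szt cmp]; exists t; split=> //; apply/(pairwiseP 0) => i j.
  rewrite !inE /= szt => lt_i lt_j lt_ij.
  by rewrite cmp // !nth_iota.
case=> t [ts szt inc_t]; exists t; split=> // a b lt_a lt_b.
by rewrite !nth_iota // ltn_nth_inc ?szt.
Qed.

Lemma occurs_pat2134 k s : 2 <= k -> occurs s (pat2134 k) <-> has_2134 k s.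
Proof.
move=> le2k; rewrite /occurs /pat2134 /= size_iota; split.
  case=> [[|b [|a t]]] [ts /= [szt] cmp] //; exists [:: b, a & t].
  split=> //; first by rewrite /=; lia.
  change ((a < b) && pairwise ltn (b :: t)).
  apply/andP; split; first by have := cmp 1 0 isT isT.
  apply/(pairwiseP 0) => i j; rewrite !inE /= => lt_i lt_j lt_ij.
  case: i j lt_i lt_j lt_ij => [|i] [|j] //= lt_i lt_j lt_ij.
    by have := cmp 0 j.+2 isT; rewrite /= nth_iota; lia.
  by have := cmp i.+2 j.+2; rewrite /= !nth_iota; lia.
case=> u [us szu]; move: szu le2k => <-.
case: u us => [|b [|a t]] // ts _ /andP[lt_ab inc_bt].
exists [:: b, a & t]; split=> //=; first by lia.
have lt_b j : j < size t -> b < nth 0 t j.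
  by move=> lt_j; move: inc_bt => /andP[/allP + _]; apply; apply: mem_nth.
have inc_t : pairwise ltn t by case/andP: inc_bt.
move=> x y lt_x lt_y.
rewrite !subSS subn0 in lt_x lt_y.
case: x lt_x => [|[|x]] lt_x; case: y lt_y => [|[|y]] lt_y /=; rewrite ?nth_iota; try lia.
all: rewrite ?ltnS in lt_x lt_y.
- by have := lt_b y lt_y; lia.
- by have := lt_b y lt_y; lia.
- by have := lt_b x lt_x; lia.
- by have := lt_b x lt_x; lia.
- by rewrite ltn_nth_inc; lia.
Qed.

Lemma schroder_seq_occurs s : uniq s ->
  schroder_seq s <-> ~ occurs s pat1243 /\ ~ occurs s pat2143.
Proof.
move=> uniq_s; split.
  move=> sch; split; case=> [[|w [|x [|y [|z [|? ?]]]]]] [sub _ cmp] //;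
    by apply: (sch w x y z sub); [apply: (cmp 0 3) | apply: (cmp 1 3) | apply: (cmp 3 2)].
case=> no1243 no2143 w x y z sub lt_wz lt_xz lt_zy.
have /andP[] := subseq_uniq sub uniq_s; rewrite !inE => /norP[neq_wx _] _.
have [lt_wx|lt_xw|eq_wx] := ltngtP w x; last by rewrite eq_wx eqxx in neq_wx.
- apply: no1243; exists [:: w; x; y; z]; split=> // a b.
  by case: a => [|[|[|[|a]]]] //; case: b => [|[|[|[|b]]]] //= _ _; lia.
- apply: no2143; exists [:: w; x; y; z]; split=> // a b.
  by case: a => [|[|[|[|a]]]] //; case: b => [|[|[|[|b]]]] //= _ _; lia.
Qed.

Definition oneline n (pi : {perm 'I_n}) : seq nat := [seq val (pi i) | i <- enum 'I_n].

Lemma size_oneline n (pi : {perm 'I_n}) : size (oneline pi) = n.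
Proof. by rewrite size_map size_enum_ord. Qed.

Lemma oneline_uniq n (pi : {perm 'I_n}) : uniq (oneline pi).
Proof. by rewrite map_inj_uniq ?enum_uniq // => i j /val_inj /perm_inj. Qed.

Lemma perm_oneline n (pi : {perm 'I_n}) : perm_eq (oneline pi) (iota 0 n).
Proof.
have sub : {subset oneline pi <= iota 0 n}.
  by move=> _ /mapP [i _ ->]; rewrite mem_iota add0n ltn_ord.
apply: uniq_perm; [exact: oneline_uniq | exact: iota_uniq |].
by apply: (uniq_min_size (oneline_uniq pi) sub _).2; rewrite size_iota size_oneline.
Qed.

Lemma oneline_inj n : injective (@oneline n).
Proof.
move=> p1 p2 /eq_in_map E; apply/permP => i; apply: val_inj; apply: E.
by rewrite mem_enum.
Qed.

Lemma contains_occurs n (pi : {perm 'I_n}) tau :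
  contains pi tau <-> occurs (oneline pi) tau.
Proof.
split.
  case=> idx [sz_idx inc_idx cmp]; exists [seq val (pi i) | i <- idx].
  split=> //; last by rewrite size_map.
  have : subseq (map val idx) (iota 0 n).
    have <- : filter (mem (map val idx)) (iota 0 n) = map val idx.
      apply: (irr_sorted_eq ltn_trans ltnn) => //.
        exact: (sorted_filter (leT := ltn) ltn_trans _ (iota_ltn_sorted 0 n)).
      move=> x; rewrite mem_filter andb_idr // => /mapP [i _ ->].
      by rewrite mem_iota ltn_ord.
    exact: filter_subseq.
  rewrite -val_enum_ord => /subseqP [m _]; rewrite -map_mask => /(inj_map val_inj) ->.
  by rewrite /oneline map_mask mask_subseq.
case=> _ [/subseqP [m _ ->] sz_t cmp]; rewrite /oneline -map_mask in sz_t cmp *.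
exists (mask m (enum 'I_n)); split=> //; first by rewrite size_map in sz_t.
by rewrite map_mask val_enum_ord; apply: sorted_mask ltn_trans _ _ (iota_ltn_sorted 0 n).
Qed.

Lemma schroderE n (pi : {perm 'I_n}) : schroder pi <-> schroder_seq (oneline pi).
Proof. by rewrite schroder_seq_occurs ?oneline_uniq // /schroder /avoids !contains_occurs. Qed.

Lemma admissible_oneline n (pi : {perm 'I_n}) : schroder pi -> admissible n (oneline pi).
Proof. by move/schroderE; split; rewrite ?size_oneline ?oneline_uniq. Qed.

Definition perm_of_seq n (t : seq nat) : {perm 'I_n} :=
  let f (i : 'I_n) := insubd i (nth 0 t i) in
  if injectiveP f is ReflectT f_inj then perm f_inj else 1%g.

Lemma oneline_perm_of_seq n t : perm_eq t (iota 0 n) -> oneline (perm_of_seq n t) = t.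
Proof.
move=> t_iota; have sz_t : size t = n by rewrite (perm_size t_iota) size_iota.
have uniq_t : uniq t by rewrite (perm_uniq t_iota) iota_uniq.
have lt_t (i : 'I_n) : nth 0 t i < n.
  have : nth 0 t i \in iota 0 n by rewrite -(perm_mem t_iota) mem_nth ?sz_t.
  by rewrite mem_iota.
have val_f (i : 'I_n) : val (insubd i (nth 0 t i) : 'I_n) = nth 0 t i.
  by rewrite val_insubd lt_t.
rewrite /perm_of_seq; case: injectiveP => [f_inj|]; last first.
  case=> i j /(congr1 val); rewrite !val_f => /eqP; rewrite nth_uniq ?sz_t //.
  by move/eqP/val_inj.
rewrite /oneline (eq_map (g := nth 0 t \o val)) => [|i]; last by rewrite permE /= val_f.
by rewrite map_comp val_enum_ord -sz_t; apply: mkseq_nth.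
Qed.

Definition omega_perm n (pi : {perm 'I_n}) : {perm 'I_n} :=
  perm_of_seq n (omega_seq n (oneline pi)).

Lemma oneline_omega_perm n (pi : {perm 'I_n}) : schroder pi ->
  oneline (omega_perm pi) = omega_seq n (oneline pi).
Proof.
move=> /admissible_oneline /omega_seqP [p _ _].
by apply: oneline_perm_of_seq; apply: perm_trans p (perm_oneline pi).
Qed.

Unset Implicit Arguments.

Theorem corollary3p4 (n : nat) : (1 <= n)%N ->
  exists omega : {perm 'I_n} -> {perm 'I_n},
    [/\ (forall pi, schroder pi -> schroder (omega pi)),
        (forall pi1 pi2, schroder pi1 -> schroder pi2 ->
           omega pi1 = omega pi2 -> pi1 = pi2),
        (forall sigma, schroder sigma ->
           exists2 pi, schroder pi & omega pi = sigma) &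
        (forall (k : nat) (pi : {perm 'I_n}), (3 <= k)%N -> schroder pi ->
           (avoids pi (inc_pat k) <-> avoids (omega pi) (pat2134 k)))].
Proof.
move=> _.
have omega_sch (pi : {perm 'I_n}) : schroder pi -> schroder (omega_perm pi).
  move=> sch; have [_ sch' _] := omega_seqP (admissible_oneline sch).
  by apply/schroderE; rewrite oneline_omega_perm.
have omega_inj (pi1 pi2 : {perm 'I_n}) : schroder pi1 -> schroder pi2 ->
    omega_perm pi1 = omega_perm pi2 -> pi1 = pi2.
  move=> sch1 sch2 E; apply: oneline_inj.
  apply: (omega_seq_inj (admissible_oneline sch1) (admissible_oneline sch2)).
  by rewrite -!oneline_omega_perm // E.
exists (@omega_perm n); split=> //; first exact: inj_in_surj.
move=> k pi le3k sch; have [_ _ stat] := omega_seqP (admissible_oneline sch).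
have le2k : 2 <= k by apply: ltnW.
by rewrite /avoids !contains_occurs oneline_omega_perm // occurs_inc_pat occurs_pat2134 // stat.
Qed.
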